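(* Let $q\in\mathbb{C}^\times$ with $q^2\ne\pm1$, $n\ge2$, $\mathbf{Q}\in\mathbb{C}^{n-1}$. Then the algebra $U_q(\mathfrak{sl}_n^{\langle\mathbf{Q}\rangle}[x])$ is generated by the elements $X^{\pm}_{i,0}$, $J_{i,1}$, $K_i^{\pm}$ for $i\in\{1,\dots,n-1\}$.
   Context: Let $I=\{1,\dots,n-1\}$, $(a_{ij})$ the Cartan matrix of type $A_{n-1}$, $[k]=(q^k-q^{-k})/(q-q^{-1})$, $[x,y]=xy-yx$. For $\mathbf{Q}=(Q_1,\dots,Q_{n-1})$, $U_q(\mathfrak{sl}_n^{\langle\mathbf{Q}\rangle}[x])$ is the $\mathbb{C}$-algebra with generators $X^{\pm}_{i,t},J_{i,t},K_i^{\pm}$ ($i\in I,t\ge0$) and relations: all $K_i^+$, $J_{j,t}$ pairwise commute; $K_i^+K_i^-=1=K_i^-K_i^+$; $(K_i^-)^2=1-(q-q^{-1})J_{i,0}$; $X^{\pm}_{i,t+1}X^{\pm}_{j,s}-q^{\pm a_{ij}}X^{\pm}_{j,s}X^{\pm}_{i,t+1}=q^{\pm a_{ij}}X^{\pm}_{i,t}X^{\pm}_{j,s+1}-X^{\pm}_{j,s+1}X^{\pm}_{i,t}$; $K_i^+X^{\pm}_{j,t}K_i^-=q^{\pm a_{ij}}X^{\pm}_{j,t}$; $q^{\pm a_{ij}}J_{i,0}X^{\pm}_{j,t}-q^{\mp a_{ij}}X^{\pm}_{j,t}J_{i,0}=[\pm a_{ij}]X^{\pm}_{j,t}$; $[J_{i,s+1},X^{\pm}_{j,t}]=q^{\pm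 a_{ij}}J_{i,s}X^{\pm}_{j,t+1}-q^{\mp a_{ij}}X^{\pm}_{j,t+1}J_{i,s}$; $[X^+_{i,t},X^-_{j,s}]=\delta_{ij}K_i^+(J_{i,s+t}-Q_iJ_{i,s+t+1})$; $[X^\pm_{i,t},X^\pm_{j,s}]=0$ if $j\ne i,i\pm1$; $X^{\pm}_{i\pm1,u}(X^{\pm}_{i,s}X^{\pm}_{i,t}+X^{\pm}_{i,t}X^{\pm}_{i,s})+(X^{\pm}_{i,s}X^{\pm}_{i,t}+X^{\pm}_{i,t}X^{\pm}_{i,s})X^{\pm}_{i\pm1,u}=(q+q^{-1})(X^{\pm}_{i,s}X^{\pm}_{i\pm1,u}X^{\pm}_{i,t}+X^{\pm}_{i,t}X^{\pm}_{i\pm1,u}X^{\pm}_{i,s})$. *)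

From HB Require Import structures.
From mathcomp Require Import all_boot all_order all_algebra.
From mathcomp Require Import complex Rstruct.
Set Implicit Arguments. Unset Strict Implicit. Unset Printing Implicit Defensive.
Import Order.TTheory GRing.Theory Num.Theory.
Local Open Scope ring_scope.

Definition C : numClosedFieldType := (Rdefinitions.R)[i].

(* Cartan matrix of type A_m (here m = n-1), indices 0..m-1 stand for 1..n-1. *)
Definition cartanA {m : nat} (i j : 'I_m) : int :=
  if i == j then (2%:Z)%R
  else if (i.+1 == j :> nat) || (j.+1 == i :> nat) then (- 1%:Z)%R else 0%R.

Definition adjacent {m : nat} (i j : 'I_m) : bool :=
  (i.+1 == j :> nat) || (j.+1 == i :> nat).

Definition sgnb (e : bool) : int := if e then 1%R else (- 1)%R.

Definition qint (q : C) (k : int) : C := (q ^ k - q ^ (- k)) / (q - q^-1).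

(* The defining relations of U_q(sl_n^<Q>[x]), stated for a family of
   elements X^{e}_{i,t} (X e i t, e = true for +), J_{i,t}, K_i^+, K_i^- of
   a C-algebra A.  Here m = n - 1. *)
Definition sl_Q_relations {m : nat} (q : C) (Q : 'I_m -> C) (A : algType C)
    (X : bool -> 'I_m -> nat -> A) (J : 'I_m -> nat -> A)
    (Kp Km : 'I_m -> A) : Prop :=
  (forall i j : 'I_m, Kp i * Kp j = Kp j * Kp i) /\
  (forall (i j : 'I_m) (t : nat), Kp i * J j t = J j t * Kp i) /\
  (forall (i j : 'I_m) (s t : nat), J i s * J j t = J j t * J i s) /\
  (forall i : 'I_m, Kp i * Km i = 1 /\ Km i * Kp i = 1) /\
  (forall i : 'I_m, Km i ^+ 2 = 1 - (q - q^-1) *: J i 0%N) /\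
  (forall (e : bool) (i j : 'I_m) (t s : nat),
      X e i t.+1 * X e j s - q ^ (sgnb e * cartanA i j) *: (X e j s * X e i t.+1)
      = q ^ (sgnb e * cartanA i j) *: (X e i t * X e j s.+1)
        - X e j s.+1 * X e i t) /\
  (forall (e : bool) (i j : 'I_m) (t : nat),
      Kp i * X e j t * Km i = q ^ (sgnb e * cartanA i j) *: X e j t) /\
  (forall (e : bool) (i j : 'I_m) (t : nat),
      q ^ (sgnb e * cartanA i j) *: (J i 0%N * X e j t)
      - q ^ (- (sgnb e * cartanA i j)) *: (X e j t * J i 0%N)
      = qint q (sgnb e * cartanA i j) *: X e j t) /\
  (forall (e : bool) (i j : 'I_m) (s t : nat),
      J i s.+1 * X e j t - X e j t * J i s.+1
      = q ^ (sgnb e * cartanA i j) *: (J i s * X e j t.+1)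
        - q ^ (- (sgnb e * cartanA i j)) *: (X e j t.+1 * J i s)) /\
  (forall (i j : 'I_m) (t s : nat),
      X true i t * X false j s - X false j s * X true i t
      = if i == j then Kp i * (J i (s + t)%N - Q i *: J i (s + t).+1) else 0) /\
  (forall (e : bool) (i j : 'I_m) (t s : nat),
      i != j -> ~~ adjacent i j ->
      X e i t * X e j s - X e j s * X e i t = 0) /\
  (forall (e : bool) (i j : 'I_m) (s t u : nat), adjacent i j ->
      X e j u * (X e i s * X e i t + X e i t * X e i s)
      + (X e i s * X e i t + X e i t * X e i s) * X e j u
      = (q + q^-1) *: (X e i s * X e j u * X e i t + X e i t * X e j u * X e i s)).

Inductive subalg_gen (A : algType C) (S : A -> Prop) : A -> Prop :=
  | sg_base a : S a -> subalg_gen S a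
  | sg_scal (c : C) : subalg_gen S (c%:A)
  | sg_add a b : subalg_gen S a -> subalg_gen S b -> subalg_gen S (a + b)
  | sg_mul a b : subalg_gen S a -> subalg_gen S b -> subalg_gen S (a * b).

From HB Require Import structures.
From mathcomp Require Import all_boot all_order all_algebra.
From mathcomp Require Import complex Rstruct.
Set Implicit Arguments. Unset Strict Implicit. Unset Printing Implicit Defensive.
Import Order.TTheory GRing.Theory Num.Theory.
Local Open Scope ring_scope.

(* The commutator with J_{i,1} raises the degree of X^{+-}_{i,t} by one, up to
   the factor [+-2], which is nonzero as q^2 <> +-1; so all X_{i,t} come from
   X_{i,0} and J_{i,1}.  Next, J_{i,0} = (1 - (K_i^-)^2) / (q - q^-1), and
   K_i^- [X^+_{i,t}, X^-_{i,0}] = J_{i,t} - Q_i J_{i,t+1}; if Q_i = 0 this is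
   J_{i,t} itself, otherwise it yields the J_{i,t} by induction from J_{i,0}. *)

Section SubalgGen.
Variables (A : algType C) (S : A -> Prop).

Lemma subalg_gen1 : subalg_gen S 1.
Proof. by rewrite -(scale1r (1 : A)); apply: sg_scal. Qed.

Lemma subalg_genZ (c : C) a : subalg_gen S a -> subalg_gen S (c *: a).
Proof. by move=> Sa; rewrite -mulr_algl; apply: sg_mul => //; apply: sg_scal. Qed.

Lemma subalg_genZ_inv (c : C) a :
  c != 0 -> subalg_gen S (c *: a) -> subalg_gen S a.
Proof.
by move=> c0 /(subalg_genZ c^-1); rewrite scalerA mulVf // scale1r.
Qed.

Lemma subalg_genB a b :
  subalg_gen S a -> subalg_gen S b -> subalg_gen S (a - b).
Proof. by move=> Sa Sb; rewrite -scaleN1r; apply: sg_add => //; apply: subalg_genZ. Qed.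

Lemma subalg_gen_comm a b :
  subalg_gen S a -> subalg_gen S b -> subalg_gen S (a * b - b * a).
Proof. by move=> Sa Sb; apply: subalg_genB; apply: sg_mul. Qed.

End SubalgGen.

Lemma subr_invr_neq0 (F : fieldType) (x : F) :
  x != 0 -> x ^+ 2 != 1 -> x - x^-1 != 0.
Proof.
move=> x0 x2; apply: contraNneq x2 => x_x.
by rewrite -subr_eq0 expr2 -[X in _ - X](mulfV x0) -mulrBr x_x mulr0.
Qed.

Lemma qintN (q : C) (k : int) : qint q (- k) = - qint q k.
Proof. by rewrite /qint opprK -mulNr opprB. Qed.

Lemma qint2_neq0 (q : C) :
  q != 0 -> q ^+ 2 != 1 -> q ^+ 2 != -1 -> qint q 2 != 0.
Proof.
move=> q0 q2 q2N; have q2_neq0 : q ^+ 2 != 0 by rewrite expf_neq0.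
by rewrite /qint mulf_neq0 ?invr_eq0 ?subr_invr_neq0 // sqrf_eq1 negb_or q2 q2N.
Qed.

Section Generation.
Variables (m : nat) (q : C) (Q : 'I_m -> C) (A : algType C).
Variables (X : bool -> 'I_m -> nat -> A) (J : 'I_m -> nat -> A).
Variables (Kp Km : 'I_m -> A).
Hypothesis rel : sl_Q_relations q Q X J Kp Km.

Lemma J0_Km_sqr i : (q - q^-1) *: J i 0 = 1 - Km i ^+ 2.
Proof.
have [_ [_ [_ [_ [Km_sqr _]]]]] := rel.
by rewrite Km_sqr subKr.
Qed.

Lemma commJ1X_diag e i t :
  J i 1 * X e i t - X e i t * J i 1 = qint q (sgnb e * 2) *: X e i t.+1.
Proof.
have [_ [_ [_ [_ [_ [_ [_ [J0X [JX _]]]]]]]]] := rel.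
by rewrite JX J0X /cartanA eqxx.
Qed.

Lemma Km_commXpXm_diag i t :
  Km i * (X true i t * X false i 0 - X false i 0 * X true i t)
  = J i t - Q i *: J i t.+1.
Proof.
have [_ [_ [_ [KpKm [_ [_ [_ [_ [_ [XpXm _]]]]]]]]]] := rel.
by rewrite XpXm eqxx add0n mulrA (proj2 (KpKm i)) mul1r.
Qed.

Hypotheses (q0 : q != 0) (q2 : q ^+ 2 != 1) (q2N : q ^+ 2 != -1).

Variable S : A -> Prop.
Hypotheses (SX0 : forall e i, S (X e i 0)) (SJ1 : forall i, S (J i 1)).
Hypothesis SKm : forall i, S (Km i).

Lemma subalg_gen_X e i t : subalg_gen S (X e i t).
Proof.
have qint_neq0 : qint q (sgnb e * 2) != 0.
  by case: e; rewrite ?mulN1r ?qintN ?oppr_eq0 qint2_neq0.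
elim: t => [|t IHt]; first exact: sg_base.
apply: (subalg_genZ_inv qint_neq0); rewrite -commJ1X_diag.
by apply: subalg_gen_comm => //; apply: sg_base.
Qed.

Lemma subalg_gen_J0 i : subalg_gen S (J i 0).
Proof.
apply: (subalg_genZ_inv (subr_invr_neq0 q0 q2)); rewrite J0_Km_sqr.
apply: subalg_genB; first exact: subalg_gen1.
by rewrite expr2; apply: sg_mul; apply: sg_base.
Qed.

Lemma subalg_gen_J i t : subalg_gen S (J i t).
Proof.
have SJQ s : subalg_gen S (J i s - Q i *: J i s.+1).
  rewrite -Km_commXpXm_diag; apply: sg_mul; first exact: sg_base.
  by apply: subalg_gen_comm; apply: subalg_gen_X.
have [Q0|Q0] := eqVneq (Q i) 0.
  by move: (SJQ t); rewrite Q0 scale0r subr0.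
elim: t => [|t IHt]; first exact: subalg_gen_J0.
apply: (subalg_genZ_inv Q0).
by rewrite -[_ *: _](subKr (J i t)); apply: subalg_genB.
Qed.

End Generation.

Theorem mainTheorem5 (n : nat) (q : C) (Q : 'I_(n.-1) -> C) :
  q != 0 -> q ^+ 2 != 1 -> q ^+ 2 != -1 -> (2 <= n)%N ->
  forall (A : algType C) (X : bool -> 'I_(n.-1) -> nat -> A)
         (J : 'I_(n.-1) -> nat -> A) (Kp Km : 'I_(n.-1) -> A),
  sl_Q_relations q Q X J Kp Km ->
  let S : A -> Prop := fun a =>
    exists i : 'I_(n.-1),
      (exists e : bool, a = X e i 0%N) \/ a = J i 1%N \/ a = Kp i \/ a = Km i in
  forall (i : 'I_(n.-1)) (t : nat),
    (forall e : bool, subalg_gen S (X e i t)) /\ subalg_gen S (J i t) /\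
    subalg_gen S (Kp i) /\ subalg_gen S (Km i).
Proof.
move=> q0 q2 q2N _ A X J Kp Km rel S i t.
have SX0 e j : S (X e j 0%N) by exists j; left; exists e.
have SJ1 j : S (J j 1%N) by exists j; right; left.
have SKp j : S (Kp j) by exists j; right; right; left.
have SKm j : S (Km j) by exists j; right; right; right.
split; first by move=> e; apply: (subalg_gen_X rel q0 q2 q2N SX0 SJ1).
split; first exact: (subalg_gen_J rel q0 q2 q2N SX0 SJ1 SKm).
by split; apply: sg_base.
Qed.
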